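(* \begin{align*} &\int_{0}^{\frac{\pi}{2}}\frac{\phi(2\cos \phi-1)}{5-4\cos \phi}\,\mathrm{d}\phi=-\frac{1}{12}\pi^{2}+\frac{1}{2}\log^{2}2+\frac{\pi}{2}\arctan{\frac{1}{2}}+\frac{1}{4}\mathrm{Li}_{2}\Big(-\frac{1}{4}\Big)\,,\\ &\int_{0}^{\frac{\pi}{2}}\frac{2\phi\sin \phi}{5-4\cos \phi}\,\mathrm{d}\phi=\frac{\pi}{4}\log\frac{5}{4}+\mathrm{Ti}_{2}\Big(\frac{1}{2}\Big)\,. \end{align*}
   Context: $\mathrm{Li}_2(x)=\sum_{n\ge1}x^n/n^2$ for $|x|\le1$ is the dilogarithm, and $\mathrm{Ti}_{2}(x)=\int_{0}^{x}\frac{\arctan y}{y}\,\mathrm{d}y$ is the inverse tangent integral. *)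

From Stdlib Require Import Reals.
From Coquelicot Require Import Coquelicot.
Open Scope R_scope.

(* Dilogarithm: Li2 x = sum_{n>=1} x^n / n^2 (meaningful for |x| <= 1). *)
Definition Li2 (x : R) : R :=
  Series (fun n : nat => x ^ (S n) / (INR (S n)) ^ 2).

Definition Ti2 (x : R) : R :=
  RInt (fun y => atan y / y) 0 x.

(* Both integrals are values at u = 1/2 of
     K(u) = int_0^(pi/2) t Re(u e^(it) / (1 - u e^(it))) dt,
     N(u) = int_0^(pi/2) t Im(u e^(it) / (1 - u e^(it))) dt.
   Differentiating under the integral sign, the t-integrals of the u-derivatives have
   elementary primitives, and one finds
     K'(u) = pi / (2 (1 + u^2)) - ln(1 + u^2) / (2u) + ln(1 - u) / u,
     N'(u) = pi u / (2 (1 + u^2)) + atan(u) / u,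
   hence K(u) = (pi/2) atan u + Li2(-u^2) / 4 - Li2(u) and N(u) = (pi/4) ln(1 + u^2) + Ti2(u).
   It remains to evaluate Li2(1/2) = pi^2/12 - ln^2(2)/2.  This follows from Euler's reflection
   formula Li2(x) + Li2(1 - x) + ln x ln(1 - x) = Li2(1): the left-hand side has zero derivative
   on (0, 1), and its limit at 0+ is Li2(1) by Abel's theorem.  Finally Li2(1) = pi^2/6 is the
   Basel problem, proved by Matsuoka's argument: with W_k = int cos^k and J_k = int x^2 cos^k
   over [0, pi/2], integration by parts gives J_k/W_k - J_(k+2)/W_(k+2) = 2/(k+2)^2, and
   J_k/W_k = O(1/k). *)
From Stdlib Require Import Reals Lra Lia.
From Coquelicot Require Import Coquelicot.
Open Scope R_scope.

Lemma is_lim_seq_inv_INR_S : is_lim_seq (fun n => / INR (S n)) 0.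
Proof.
  change (Finite 0) with (Rbar_inv p_infty).
  apply is_lim_seq_inv; [| discriminate].
  apply (is_lim_seq_incr_1 INR), is_lim_seq_INR.
Qed.

Lemma Rabs_lt_1_iff (u : R) : Rabs u < 1 <-> -1 < u < 1.
Proof. split; [intros H; apply Rabs_def2 in H; lra | intros H; apply Rabs_def1; lra]. Qed.

Lemma sin_sq_add_cos_sq (x : R) : sin x ^ 2 + cos x ^ 2 = 1.
Proof. rewrite <- (sin2_cos2 x). unfold Rsqr. ring. Qed.

Lemma ln_le_sub_1 (y : R) : 0 < y -> ln y <= y - 1.
Proof. intros Hy. pose proof (exp_ineq1_le (ln y)). rewrite exp_ln in H; lra. Qed.

Lemma continuous_of_is_derive (f : R -> R) (x l : R) : is_derive f x l -> continuous f x.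
Proof.
  intros H. apply (ex_derive_continuous (K := R_AbsRing) (V := R_NormedModule)).
  exists l. exact H.
Qed.

Ltac solve_continuous := intros; eapply continuous_of_is_derive; auto_derive; auto.

Lemma eq_of_is_derive_same (f g df : R -> R) (a b : R) :
  (forall t, Rmin a b <= t <= Rmax a b -> is_derive f t (df t)) ->
  (forall t, Rmin a b <= t <= Rmax a b -> is_derive g t (df t)) ->
  f a = g a -> f b = g b.
Proof.
  intros Hf Hg Hab.
  assert (Hd : forall t, Rmin a b <= t <= Rmax a b ->
            is_derive (fun x => f x - g x) t zero).
  { intros t Ht. pose proof (is_derive_minus f g t _ _ (Hf t Ht) (Hg t Ht)) as H.
    rewrite minus_eq_zero in H. exact H. }
  enough (f a - g a = f b - g b) by lra.
  destruct (Rtotal_order a b) as [Hlt | [-> | Hgt]]; auto.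
  - apply (eq_is_derive (fun x => f x - g x)); auto.
    intros t Ht. apply Hd. rewrite Rmin_left, Rmax_right; lra.
  - symmetry. apply (eq_is_derive (fun x => f x - g x)); auto.
    intros t Ht. apply Hd. rewrite Rmin_right, Rmax_left; lra.
Qed.

Lemma RInt_antiderivative (F f : R -> R) (a b : R) :
  (forall x, Rmin a b <= x <= Rmax a b -> is_derive F x (f x)) ->
  (forall x, Rmin a b <= x <= Rmax a b -> continuous f x) ->
  RInt f a b = F b - F a :> R.
Proof.
  intros HF Hf. apply is_RInt_unique.
  exact (is_RInt_derive (V := R_CompleteNormedModule) F f a b HF Hf).
Qed.

Lemma RInt_ext_R (f g : R -> R) (a b : R) :
  (forall x, Rmin a b < x < Rmax a b -> f x = g x) -> RInt f a b = RInt g a b :> R.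
Proof. apply RInt_ext. Qed.

Lemma RInt_R_const (c a b : R) : RInt (fun _ => c) a b = (b - a) * c :> R.
Proof. exact (RInt_const (V := R_CompleteNormedModule) a b c). Qed.

Lemma RInt_lin_comb (f g : R -> R) (c d a b : R) :
  ex_RInt f a b -> ex_RInt g a b ->
  RInt (fun x => c * f x + d * g x) a b = c * RInt f a b + d * RInt g a b :> R.
Proof.
  intros Hf Hg.
  rewrite (RInt_plus (V := R_CompleteNormedModule) (fun x => c * f x) (fun x => d * g x));
    try apply (ex_RInt_scal (V := R_CompleteNormedModule)); auto.
  rewrite (RInt_scal (V := R_CompleteNormedModule) f), (RInt_scal (V := R_CompleteNormedModule) g);
    auto.
Qed.

Lemma is_derive_RInt_param_interval (f df : R -> R -> R) (a b lo hi r : R) :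
  (forall u t, lo < u < hi -> is_derive (fun z => f z t) u (df u t)) ->
  (forall u t, lo < u < hi -> continuity_2d_pt df u t) ->
  (forall u t, lo < u < hi -> continuous (f u) t) ->
  lo < r < hi ->
  is_derive (fun u => RInt (f u) a b) r (RInt (df r) a b).
Proof.
  intros Hd Hc Hf Hr.
  assert (Hdel : 0 < Rmin (r - lo) (hi - r)) by (apply Rmin_glb_lt; lra).
  set (del := mkposreal _ Hdel).
  assert (Hnear : forall u, ball r del u -> lo < u < hi).
  { intros u Hu. cbn in Hu. unfold AbsRing_ball, abs, minus, plus, opp in Hu. cbn in Hu.
    apply Rabs_def2 in Hu. pose proof (Rmin_l (r - lo) (hi - r)).
    pose proof (Rmin_r (r - lo) (hi - r)). lra. }
  replace (RInt (df r) a b) with (RInt (fun t => Derive (fun u => f u t) r) a b).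
  2:{ apply RInt_ext. intros t _. apply is_derive_unique, Hd, Hr. }
  apply (is_derive_RInt_param f a b r).
  - exists del. intros u Hu t _. exists (df u t). apply Hd, Hnear, Hu.
  - intros t _. apply continuity_2d_pt_ext_loc with df; [| apply Hc, Hr].
    exists del. intros u v Hu _. symmetry. apply is_derive_unique, Hd, Hnear, Hu.
  - exists del. intros u Hu. apply (ex_RInt_continuous (V := R_CompleteNormedModule)).
    intros t _. apply Hf, Hnear, Hu.
Qed.

Ltac solve_continuity_2d :=
  repeat first
   [ apply continuity_2d_pt_id1
   | apply continuity_2d_pt_id2
   | apply continuity_2d_pt_const
   | apply continuity_2d_pt_mult
   | apply continuity_2d_pt_plus
   | apply continuity_2d_pt_minus
   | apply continuity_2d_pt_opp
   | apply (continuity_1d_2d_pt_comp cos); [apply continuity_cos |]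
   | apply (continuity_1d_2d_pt_comp sin); [apply continuity_sin |]
   | apply continuity_2d_pt_inv ].

Lemma filterlim_Rplus {T : Type} {F : (T -> Prop) -> Prop} {FF : Filter F}
  (f g : T -> R) (a b : R) :
  filterlim f F (locally a) -> filterlim g F (locally b) ->
  filterlim (fun x => f x + g x) F (locally (a + b)).
Proof.
  intros Hf Hg. eapply filterlim_comp_2; [exact Hf | exact Hg |].
  exact (filterlim_plus (K := R_AbsRing) (V := R_NormedModule) a b).
Qed.

Lemma filterlim_at_right_continuous (f : R -> R) (x : R) :
  continuous f x -> filterlim f (at_right x) (locally (f x)).
Proof.
  apply filterlim_filter_le_1. intros P [d Hd]. exists d. intros y Hy _. exact (Hd y Hy).
Qed.

Lemma filterlim_1_minus_at_right_0 : filterlim (fun x => 1 - x) (at_right 0) (at_left 1).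
Proof.
  intros P [d Hd]. exists d. intros y Hy Hpos. apply Hd; [| lra].
  cbn in *. unfold AbsRing_ball, abs, minus, plus, opp in *. cbn in *.
  apply Rabs_def2 in Hy. apply Rabs_def1; lra.
Qed.

(** * Wallis integrals and the Basel problem *)

Definition wallis (k : nat) : R := RInt (fun x => cos x ^ k) 0 (PI / 2).
Definition wallis_sq (k : nat) : R := RInt (fun x => x ^ 2 * cos x ^ k) 0 (PI / 2).

Lemma ex_RInt_cos_pow (k : nat) : ex_RInt (fun x => cos x ^ k) 0 (PI / 2).
Proof. apply (ex_RInt_continuous (V := R_CompleteNormedModule)). solve_continuous. Qed.

Lemma ex_RInt_sq_cos_pow (k : nat) : ex_RInt (fun x => x ^ 2 * cos x ^ k) 0 (PI / 2).
Proof. apply (ex_RInt_continuous (V := R_CompleteNormedModule)). solve_continuous. Qed.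

Lemma wallis_0 : wallis 0 = PI / 2.
Proof.
  unfold wallis. rewrite (RInt_antiderivative (fun x => x)); [ring | |].
  - intros x _. auto_derive; auto.
  - solve_continuous.
Qed.

Lemma wallis_sq_0 : wallis_sq 0 = PI ^ 3 / 24.
Proof.
  unfold wallis_sq. rewrite (RInt_antiderivative (fun x => x ^ 3 / 3)); [field | |].
  - intros x _. auto_derive; auto. simpl. field.
  - solve_continuous.
Qed.

Lemma cos_pow_S_PI2 (k : nat) : cos (PI / 2) ^ S k = 0.
Proof. rewrite cos_PI2. apply pow_i. lia. Qed.

Lemma is_derive_sin_mul_cos_pow (k : nat) (x : R) :
  is_derive (fun x => sin x * cos x ^ S k) x
    (INR (k + 2) * cos x ^ (k + 2) + (- INR (k + 1)) * cos x ^ k).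
Proof.
  auto_derive; auto.
  change (match k with 0%nat => 1 | S _ => INR k + 1 end) with (INR (S k)).
  replace (k + 2)%nat with (S (S k)) by lia. rewrite !plus_INR, !S_INR.
  apply Rminus_diag_uniq.
  replace (_ - _) with ((sin x ^ 2 + cos x ^ 2 - 1) * (- (INR k + 1) * cos x ^ k)) by (simpl; ring).
  rewrite sin_sq_add_cos_sq. ring.
Qed.

Lemma wallis_rec (k : nat) : INR (k + 2) * wallis (k + 2) = INR (k + 1) * wallis k.
Proof.
  enough (H : RInt (fun x => INR (k + 2) * cos x ^ (k + 2) + (- INR (k + 1)) * cos x ^ k)
                0 (PI / 2) = 0 :> R).
  { unfold wallis. rewrite RInt_lin_comb in H by apply ex_RInt_cos_pow. lra. }
  rewrite (RInt_antiderivative (fun x => sin x * cos x ^ S k)).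
  - rewrite cos_pow_S_PI2, sin_0. ring.
  - intros x _. exact (is_derive_sin_mul_cos_pow k x).
  - solve_continuous.
Qed.

Lemma is_derive_wallis_sq_primitive (k : nat) (x : R) :
  is_derive (fun x => 2 * x * cos x ^ (k + 2) + INR (k + 2) * (x ^ 2 * (sin x * cos x ^ S k))) x
    (2 * cos x ^ (k + 2) + INR (k + 2) *
       (INR (k + 2) * (x ^ 2 * cos x ^ (k + 2)) + (- INR (k + 1)) * (x ^ 2 * cos x ^ k))).
Proof.
  auto_derive; auto.
  change (match k with 0%nat => 1 | S _ => INR k + 1 end) with (INR (S k)).
  replace (k + 2)%nat with (S (S k)) by lia. rewrite !plus_INR, !S_INR.
  apply Rminus_diag_uniq.
  replace (_ - _) with ((sin x ^ 2 + cos x ^ 2 - 1) *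
    (- (INR k + 1 + 1) * (INR k + 1) * x ^ 2 * cos x ^ k)) by (simpl; ring).
  rewrite sin_sq_add_cos_sq. ring.
Qed.

Lemma wallis_sq_rec (k : nat) :
  INR (k + 2) ^ 2 * wallis_sq (k + 2) + 2 * wallis (k + 2)
  = INR (k + 2) * INR (k + 1) * wallis_sq k.
Proof.
  set (g x := INR (k + 2) * (x ^ 2 * cos x ^ (k + 2)) + (- INR (k + 1)) * (x ^ 2 * cos x ^ k)).
  assert (Hg : RInt g 0 (PI / 2)
               = INR (k + 2) * wallis_sq (k + 2) + (- INR (k + 1)) * wallis_sq k :> R).
  { unfold g. rewrite RInt_lin_comb by apply ex_RInt_sq_cos_pow. reflexivity. }
  enough (H : RInt (fun x => 2 * cos x ^ (k + 2) + INR (k + 2) * g x) 0 (PI / 2) = 0 :> R).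
  { rewrite RInt_lin_comb in H.
    - fold (wallis (k + 2)) in H. rewrite Hg in H. nra.
    - apply ex_RInt_cos_pow.
    - apply (ex_RInt_continuous (V := R_CompleteNormedModule)). unfold g. solve_continuous. }
  rewrite (RInt_antiderivative
    (fun x => 2 * x * cos x ^ (k + 2) + INR (k + 2) * (x ^ 2 * (sin x * cos x ^ S k)))).
  - replace (k + 2)%nat with (S (S k)) by lia. rewrite !cos_pow_S_PI2, sin_0. ring.
  - intros x _. exact (is_derive_wallis_sq_primitive k x).
  - unfold g. solve_continuous.
Qed.

Lemma wallis_pos (k : nat) : 0 < wallis k.
Proof.
  pose proof PI_RGT_0.
  apply RInt_gt_0; [lra | | solve_continuous].
  intros x Hx. apply pow_lt, cos_gt_0; lra.
Qed.

Lemma wallis_sq_ge0 (k : nat) : 0 <= wallis_sq k.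
Proof.
  pose proof PI_RGT_0.
  apply RInt_ge_0; [lra | apply ex_RInt_sq_cos_pow |].
  intros x Hx. apply Rmult_le_pos; [apply pow2_ge_0 |]. apply pow_le, Rlt_le, cos_gt_0; lra.
Qed.

Lemma le_3_sin (x : R) : 0 <= x <= PI / 2 -> x <= 3 * sin x.
Proof.
  intros Hx. pose proof PI_4.
  destruct (sin_bound x 0) as [Hlb _]; [lra | lra |].
  unfold sin_approx, sin_term in Hlb. simpl in Hlb.
  assert (x * x <= 4) by nra.
  nra.
Qed.

Lemma wallis_sq_le (k : nat) : wallis_sq k <= 9 * wallis k / INR (k + 2).
Proof.
  pose proof PI_RGT_0.
  assert (Hk : 0 < INR (k + 2)) by (apply lt_0_INR; lia).
  replace (9 * wallis k / INR (k + 2)) with (9 * wallis k + (- 9) * wallis (k + 2)).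
  2:{ pose proof (wallis_rec k) as Hrec. rewrite !plus_INR in *. simpl in *.
      apply (Rmult_eq_reg_l (INR k + 2)); [| lra]. field_simplify; lra. }
  unfold wallis. rewrite <- RInt_lin_comb by apply ex_RInt_cos_pow.
  apply RInt_le; [lra | apply ex_RInt_sq_cos_pow | |].
  - apply (ex_RInt_continuous (V := R_CompleteNormedModule)). solve_continuous.
  - intros x Hx.
    assert (Hsin : x ^ 2 <= 9 * sin x ^ 2).
    { pose proof (le_3_sin x ltac:(lra)). nra. }
    replace (9 * cos x ^ k + - 9 * cos x ^ (k + 2)) with (9 * sin x ^ 2 * cos x ^ k).
    + apply Rmult_le_compat_r; [apply pow_le, Rlt_le, cos_gt_0; lra | lra].
    + rewrite pow_add. replace (sin x ^ 2) with (1 - cos x ^ 2).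
      * ring.
      * pose proof (sin_sq_add_cos_sq x). lra.
Qed.

Definition wallis_ratio (k : nat) : R := wallis_sq k / wallis k.

Lemma wallis_ratio_0 : wallis_ratio 0 = PI ^ 2 / 12.
Proof.
  unfold wallis_ratio. rewrite wallis_sq_0, wallis_0. field. apply PI_neq0.
Qed.

Lemma wallis_ratio_step (k : nat) :
  wallis_ratio k - wallis_ratio (k + 2) = 2 / INR (k + 2) ^ 2.
Proof.
  pose proof (wallis_rec k) as Hw. pose proof (wallis_sq_rec k) as Hj.
  pose proof (wallis_pos k).
  unfold wallis_ratio. rewrite !plus_INR in *. simpl INR in *.
  set (b := INR k + (1 + 1)) in *.
  assert (Hb : 2 <= b) by (pose proof (pos_INR k); unfold b; lra).
  assert (HW : wallis (k + 2) = (b - 1) / b * wallis k).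
  { apply (Rmult_eq_reg_l b); [| lra]. field_simplify; [| lra]. unfold b in *. lra. }
  assert (HJ : wallis_sq (k + 2) = (b * (b - 1) * wallis_sq k - 2 * wallis (k + 2)) / b ^ 2).
  { apply (Rmult_eq_reg_l (b ^ 2)); [| nra]. field_simplify; [| lra]. unfold b in *. lra. }
  rewrite HJ, HW. field. lra.
Qed.

Lemma wallis_ratio_bounds (k : nat) : 0 <= wallis_ratio k <= 9 / INR (k + 2).
Proof.
  pose proof (wallis_pos k). pose proof (wallis_sq_ge0 k). pose proof (wallis_sq_le k).
  assert (0 < INR (k + 2)) by (apply lt_0_INR; lia).
  unfold wallis_ratio. split.
  - apply Rdiv_le_0_compat; lra.
  - apply (Rmult_le_reg_r (wallis k)); [lra |].
    replace (wallis_sq k / wallis k * wallis k) with (wallis_sq k) by (field; lra).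
    replace (9 / INR (k + 2) * wallis k) with (9 * wallis k / INR (k + 2)) by (field; lra).
    assumption.
Qed.

(* Each term [1/(j+1)^2] is [2 (r (2j) - r (2j+2))] for [r := wallis_ratio], so the sum telescopes. *)
Lemma sum_inv_sq (n : nat) :
  sum_n (fun j => / INR (S j) ^ 2) n = PI ^ 2 / 6 - 2 * wallis_ratio (2 * n + 2) :> R.
Proof.
  assert (Hterm : forall j,
            / INR (S j) ^ 2 = 2 * (wallis_ratio (2 * j) - wallis_ratio (2 * j + 2))).
  { intros j. rewrite wallis_ratio_step.
    replace (INR (2 * j + 2)) with (2 * INR (S j))
      by (rewrite S_INR, plus_INR, mult_INR; simpl; ring).
    field. apply not_0_INR. lia. }
  induction n as [| n IHn].
  - rewrite sum_O, Hterm. simpl. rewrite wallis_ratio_0. field.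
  - rewrite sum_Sn, IHn, Hterm. change (plus ?a ?b) with (a + b).
    replace (2 * S n)%nat with (2 * n + 2)%nat by lia. ring.
Qed.

Lemma Basel : is_series (fun j => / INR (S j) ^ 2) (PI ^ 2 / 6).
Proof.
  enough (H : is_lim_seq (sum_n (fun j => / INR (S j) ^ 2)) (PI ^ 2 / 6)) by exact H.
  apply is_lim_seq_le_le with (fun n => PI ^ 2 / 6 - 18 * / INR (S (S n))) (fun _ => PI ^ 2 / 6).
  - intros n. rewrite sum_inv_sq. pose proof (wallis_ratio_bounds (2 * n + 2)) as [H0 H9].
    replace (INR (2 * n + 2 + 2)) with (2 * INR (S (S n))) in H9
      by (rewrite !S_INR, !plus_INR, mult_INR; simpl; ring).
    assert (0 < INR (S (S n))) by (apply lt_0_INR; lia).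
    replace (9 / (2 * INR (S (S n)))) with (9 / 2 * / INR (S (S n))) in H9 by (field; lra).
    lra.
  - replace (Finite (PI ^ 2 / 6)) with (Finite (PI ^ 2 / 6 - 18 * 0)) by (f_equal; ring).
    apply is_lim_seq_minus'; [apply is_lim_seq_const |].
    apply (is_lim_seq_scal_l _ 18 0).
    apply (is_lim_seq_incr_1 (fun n => / INR (S n))), is_lim_seq_inv_INR_S.
  - apply is_lim_seq_const.
Qed.

(** * The dilogarithm *)

Definition Li2_coef : nat -> R := PS_incr_1 (fun n => / INR (S n) ^ 2).

Lemma Li2_PSeries (x : R) : Li2 x = PSeries Li2_coef x.
Proof.
  unfold Li2_coef. rewrite PSeries_incr_1. unfold PSeries, Li2.
  rewrite <- Series_scal_l. apply Series_ext. intros n.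
  rewrite <- tech_pow_Rmult. field. apply not_0_INR. lia.
Qed.

Lemma CV_radius_Li2_coef : CV_radius Li2_coef = 1.
Proof.
  unfold Li2_coef. rewrite CV_radius_incr_1.
  replace 1 with (/ 1) by field.
  apply CV_radius_finite_DAlembert; [| lra |].
  - intros n. apply Rinv_neq_0_compat, pow_nonzero, not_0_INR. lia.
  - assert (Hq : is_lim_seq (fun n => 1 - / INR (S (S n))) 1).
    { replace (Finite 1) with (Finite (1 - 0)) by (f_equal; ring).
      apply is_lim_seq_minus'; [apply is_lim_seq_const |].
      apply (is_lim_seq_incr_1 (fun n => / INR (S n))), is_lim_seq_inv_INR_S. }
    replace (Finite 1) with (Finite (1 * 1)) by (f_equal; ring).
    apply is_lim_seq_ext with (fun n => (1 - / INR (S (S n))) * (1 - / INR (S (S n)))).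
    + intros n. assert (0 < INR (S n)) by (apply lt_0_INR; lia).
      rewrite Rabs_pos_eq; rewrite !S_INR in *.
      * field. lra.
      * apply Rlt_le, Rdiv_lt_0_compat; apply Rinv_0_lt_compat, pow_lt; lra.
    + apply is_lim_seq_mult'; exact Hq.
Qed.

Lemma Li2_0 : Li2 0 = 0.
Proof. rewrite Li2_PSeries, PSeries_0. reflexivity. Qed.

Lemma Li2_1 : Li2 1 = PI ^ 2 / 6.
Proof.
  apply is_series_unique. eapply is_series_ext; [| exact Basel].
  intros n. rewrite pow1. symmetry. apply Rdiv_1_l.
Qed.

Lemma is_derive_Li2 (x : R) : Rabs x < 1 -> is_derive Li2 x (Derive Li2 x).
Proof.
  intros Hx. apply Derive_correct.
  apply (ex_derive_ext (PSeries Li2_coef)); [intros t; symmetry; apply Li2_PSeries |].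
  apply ex_derive_PSeries. rewrite CV_radius_Li2_coef. exact Hx.
Qed.

Lemma Derive_Li2_PSeries (x : R) :
  Rabs x < 1 -> Derive Li2 x = PSeries (PS_derive Li2_coef) x.
Proof.
  intros Hx. rewrite <- Derive_PSeries by (rewrite CV_radius_Li2_coef; exact Hx).
  apply Derive_ext. apply Li2_PSeries.
Qed.

Lemma Derive_Li2_0 : Derive Li2 0 = 1.
Proof.
  rewrite Derive_Li2_PSeries, PSeries_0 by (rewrite Rabs_R0; lra).
  unfold PS_derive, Li2_coef, PS_incr_1. simpl. field.
Qed.

(* [x Li2'(x)] is the power series [sum x^n/n]; differentiating it termwise
   gives the geometric series, i.e. the derivative of [- ln (1 - x)]. *)
Lemma mul_Derive_Li2 (x : R) : Rabs x < 1 -> x * Derive Li2 x = - ln (1 - x).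
Proof.
  intros Hx.
  set (c := PS_incr_1 (PS_derive Li2_coef)).
  assert (Hc : CV_radius c = 1).
  { unfold c. rewrite CV_radius_incr_1, CV_radius_derive. apply CV_radius_Li2_coef. }
  assert (Hdisk : forall t, Rmin 0 x <= t <= Rmax 0 x -> Rabs t < 1).
  { intros t Ht. apply Rabs_lt_1_iff. apply Rabs_lt_1_iff in Hx. unfold Rmin, Rmax in Ht.
    destruct Rle_dec; lra. }
  transitivity (PSeries c x).
  { rewrite Derive_Li2_PSeries by exact Hx. symmetry. apply PSeries_incr_1. }
  apply (eq_of_is_derive_same (PSeries c) (fun t => - ln (1 - t)) (fun t => / (1 - t)) 0 x).
  - intros t Ht. specialize (Hdisk t Ht).
    replace (/ (1 - t)) with (PSeries (PS_derive c) t).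
    + apply is_derive_PSeries. rewrite Hc. exact Hdisk.
    + rewrite <- Series_geom by exact Hdisk. apply Series_ext. intros n.
      unfold c, PS_derive, PS_incr_1, Li2_coef, PS_incr_1.
      cbn -[pow INR]. field. apply not_0_INR. lia.
  - intros t Ht. specialize (Hdisk t Ht). apply Rabs_lt_1_iff in Hdisk.
    auto_derive; [lra | field; lra].
  - rewrite PSeries_0, Rminus_0_r, ln_1. cbn. ring.
Qed.

Lemma filterlim_Li2_at_left_1 : filterlim Li2 (at_left 1) (locally (Li2 1)).
Proof.
  assert (Hsum : ex_pseries Li2_coef 1).
  { apply ex_pseries_incr_1. exists (PI ^ 2 / 6).
    eapply is_series_ext; [| exact Basel].
    intros n. rewrite pow_n_pow, pow1. cbn. unfold mult. cbn. ring. }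
  pose proof (Abel Li2_coef) as HAbel. rewrite CV_radius_Li2_coef in HAbel.
  rewrite Li2_PSeries.
  apply (filterlim_ext (PSeries Li2_coef)); [intros x; symmetry; apply Li2_PSeries |].
  apply HAbel; [cbn; lra | exact I | exact Hsum].
Qed.

Lemma filterlim_Li2_at_right_0 : filterlim Li2 (at_right 0) (locally 0).
Proof.
  rewrite <- Li2_0 at 2. apply filterlim_at_right_continuous.
  apply continuous_of_is_derive with (Derive Li2 0). apply is_derive_Li2. rewrite Rabs_R0. lra.
Qed.

Lemma Rabs_ln_mul_ln_1_minus_le (x : R) :
  0 < x <= 1 / 2 -> Rabs (ln x * ln (1 - x)) <= 4 * sqrt x.
Proof.
  intros Hx.
  assert (Hs : 0 < sqrt x) by (apply sqrt_lt_R0; lra).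
  assert (Hss : sqrt x * sqrt x = x) by (apply sqrt_sqrt; lra).
  assert (H1 : 0 <= - ln (1 - x) <= 2 * x).
  { rewrite <- ln_Rinv by lra. split.
    - rewrite <- ln_1. apply ln_le; [lra |].
      rewrite <- Rinv_1. apply Rinv_le_contravar; lra.
    - eapply Rle_trans; [apply ln_le_sub_1, Rinv_0_lt_compat; lra |].
      replace (/ (1 - x) - 1) with (x / (1 - x)) by (field; lra).
      apply (Rmult_le_reg_r (1 - x)); [lra |]. field_simplify; nra. }
  assert (H2 : 0 <= - ln x <= 2 / sqrt x).
  { split.
    - pose proof (ln_le x 1 ltac:(lra) ltac:(lra)). rewrite ln_1 in *. lra.
    - assert (Hln : ln x = 2 * ln (sqrt x))
        by (rewrite <- Hss at 1; rewrite ln_mult by lra; ring).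
      rewrite Hln, Ropp_mult_distr_r, <- ln_Rinv by lra.
      pose proof (ln_le_sub_1 (/ sqrt x) ltac:(apply Rinv_0_lt_compat; lra)).
      unfold Rdiv. lra. }
  rewrite Rabs_pos_eq by nra.
  replace (ln x * ln (1 - x)) with (- ln x * - ln (1 - x)) by ring.
  replace (4 * sqrt x) with (2 / sqrt x * (2 * (sqrt x * sqrt x))) by (field; lra).
  rewrite Hss. apply Rmult_le_compat; lra.
Qed.

Lemma filterlim_ln_mul_ln_1_minus_at_right_0 :
  filterlim (fun x => ln x * ln (1 - x)) (at_right 0) (locally 0).
Proof.
  assert (Hsqrt : continuous (fun x => 4 * sqrt x) 0).
  { apply (continuous_mult (fun _ => 4) sqrt); [apply continuous_const |].
    apply continuity_pt_filterlim, continuity_pt_sqrt. lra. }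
  assert (Hopp : continuous (fun x => - (4 * sqrt x)) 0) by exact (continuous_opp _ 0 Hsqrt).
  apply filterlim_at_right_continuous in Hsqrt, Hopp.
  rewrite sqrt_0, Rmult_0_r in Hsqrt, Hopp. rewrite Ropp_0 in Hopp.
  apply (filterlim_le_le (fun x => - (4 * sqrt x)) (fun x => ln x * ln (1 - x))
           (fun x => 4 * sqrt x) (Finite 0)); auto.
  exists (mkposreal (1 / 2) ltac:(lra)). intros y Hy Hpos.
  apply Rabs_le_between, Rabs_ln_mul_ln_1_minus_le. split; [exact Hpos |].
  cbn in Hy. unfold AbsRing_ball, abs, minus, plus, opp in Hy. cbn in Hy.
  apply Rabs_def2 in Hy. lra.
Qed.

Lemma is_derive_Li2_reflection (t : R) :
  0 < t < 1 -> is_derive (fun x => Li2 x + Li2 (1 - x) + ln x * ln (1 - x)) t 0.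
Proof.
  intros Ht.
  assert (Hd1 := is_derive_Li2 t ltac:(apply Rabs_lt_1_iff; lra)).
  assert (Hd2 := is_derive_Li2 (1 - t) ltac:(apply Rabs_lt_1_iff; lra)).
  assert (E1 := mul_Derive_Li2 t ltac:(apply Rabs_lt_1_iff; lra)).
  assert (E2 := mul_Derive_Li2 (1 - t) ltac:(apply Rabs_lt_1_iff; lra)).
  replace (1 - (1 - t)) with t in E2 by ring.
  auto_derive.
  - repeat split; try lra; eexists; eauto.
  - change (Derive (fun x => Li2 x)) with (Derive Li2).
    replace (1 + - t) with (1 - t) by ring.
    replace (Derive Li2 t) with (- ln (1 - t) / t) by (rewrite <- E1; field; lra).
    replace (Derive Li2 (1 - t)) with (- ln t / (1 - t)) by (rewrite <- E2; field; lra).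
    field. lra.
Qed.

Lemma Li2_reflection (x : R) :
  0 < x < 1 -> Li2 x + Li2 (1 - x) + ln x * ln (1 - x) = PI ^ 2 / 6.
Proof.
  intros Hx.
  set (E y := Li2 y + Li2 (1 - y) + ln y * ln (1 - y)).
  apply (filterlim_locally_unique (F := at_right 0) E).
  - apply (filterlim_ext_loc (fun _ => E x)); [| apply filterlim_const].
    exists (mkposreal 1 Rlt_0_1). intros y Hy Hpos.
    cbn in Hy. unfold AbsRing_ball, abs, minus, plus, opp in Hy. cbn in Hy.
    apply Rabs_def2 in Hy.
    apply (eq_of_is_derive_same (fun _ => E x) E (fun _ => 0) x y); [| | reflexivity].
    + intros t _. exact (is_derive_const (K := R_AbsRing) (E x) t).
    + intros t Ht. apply is_derive_Li2_reflection. unfold Rmin, Rmax in Ht.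
      destruct Rle_dec; lra.
  - rewrite <- Li2_1. replace (Li2 1) with (0 + Li2 1 + 0) by ring.
    apply filterlim_Rplus; [apply filterlim_Rplus |].
    + exact filterlim_Li2_at_right_0.
    + eapply filterlim_comp; [exact filterlim_1_minus_at_right_0 | exact filterlim_Li2_at_left_1].
    + exact filterlim_ln_mul_ln_1_minus_at_right_0.
Qed.

Lemma Li2_half : Li2 (1 / 2) = PI ^ 2 / 12 - ln 2 ^ 2 / 2.
Proof.
  pose proof (Li2_reflection (1 / 2) ltac:(lra)) as H.
  replace (1 - 1 / 2) with (1 / 2) in H by field.
  replace (ln (1 / 2)) with (- ln 2) in H by (unfold Rdiv; rewrite Rmult_1_l, ln_Rinv; lra).
  lra.
Qed.

(** * Parametric integrals against the Poisson kernel *)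

(* [1 - 2 u cos t + u^2 = |1 - u e^(it)|^2]. *)
Definition poisson_den (u t : R) : R := 1 - 2 * u * cos t + u * u.

Lemma poisson_den_pos (u t : R) : Rabs u < 1 -> 0 < poisson_den u t.
Proof.
  intros Hu. pose proof (COS_bound t). apply Rabs_def2 in Hu. unfold poisson_den.
  destruct (Rle_dec 0 u); nra.
Qed.

(* Real and imaginary parts of [u e^(it) / (1 - u e^(it)) = sum_(n>=1) u^n e^(int)]. *)
Definition cos_kernel (u t : R) : R := (u * cos t - u * u) / poisson_den u t.
Definition sin_kernel (u t : R) : R := u * sin t / poisson_den u t.

Definition cos_kernel_du (u t : R) : R := (cos t - 2 * u + u * u * cos t) / poisson_den u t ^ 2.
Definition sin_kernel_du (u t : R) : R := sin t * (1 - u * u) / poisson_den u t ^ 2.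

Lemma is_derive_cos_kernel (u t : R) :
  Rabs u < 1 -> is_derive (fun z => t * cos_kernel z t) u (t * cos_kernel_du u t).
Proof.
  intros Hu. pose proof (poisson_den_pos u t Hu).
  unfold cos_kernel, cos_kernel_du, poisson_den in *. auto_derive; [lra |]. field. lra.
Qed.

Lemma is_derive_sin_kernel (u t : R) :
  Rabs u < 1 -> is_derive (fun z => t * sin_kernel z t) u (t * sin_kernel_du u t).
Proof.
  intros Hu. pose proof (poisson_den_pos u t Hu).
  unfold sin_kernel, sin_kernel_du, poisson_den in *. auto_derive; [lra |]. field. lra.
Qed.

Lemma continuity_2d_pt_cos_kernel_du (u t : R) :
  Rabs u < 1 -> continuity_2d_pt (fun u t => t * cos_kernel_du u t) u t.
Proof.
  intros Hu. pose proof (poisson_den_pos u t Hu).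
  unfold cos_kernel_du, poisson_den in *. unfold Rdiv. simpl pow. solve_continuity_2d. nra.
Qed.

Lemma continuity_2d_pt_sin_kernel_du (u t : R) :
  Rabs u < 1 -> continuity_2d_pt (fun u t => t * sin_kernel_du u t) u t.
Proof.
  intros Hu. pose proof (poisson_den_pos u t Hu).
  unfold sin_kernel_du, poisson_den in *. unfold Rdiv. simpl pow. solve_continuity_2d. nra.
Qed.

(* The integrand of [Ti2], extended continuously at [0] (where [atan 0 / 0] is [0]). *)
Definition atanc (y : R) : R := if Req_dec_T y 0 then 1 else atan y / y.

Lemma atanc_0 : atanc 0 = 1.
Proof. unfold atanc. destruct Req_dec_T; congruence. Qed.

Lemma atanc_neq0 (y : R) : y <> 0 -> atanc y = atan y / y.
Proof. intros Hy. unfold atanc. destruct Req_dec_T; congruence. Qed.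

(* At [0], [atan y / y] is the difference quotient of [atan], which tends to [atan' 0 = 1]. *)
Lemma continuous_atanc (y : R) : continuous atanc y.
Proof.
  destruct (Req_dec y 0) as [-> | Hy].
  - apply filterlim_locally. intros eps.
    destruct (derivable_pt_lim_atan 0 eps (cond_pos eps)) as [d Hd].
    exists d. intros h Hh. cbn in Hh |- *. unfold AbsRing_ball, abs, minus, plus, opp in *.
    cbn in Hh |- *. rewrite atanc_0. destruct (Req_dec h 0) as [-> | Hh0].
    + rewrite atanc_0, Rplus_opp_r, Rabs_R0. apply cond_pos.
    + rewrite atanc_neq0 by exact Hh0.
      rewrite Ropp_0, Rplus_0_r in Hh. specialize (Hd h Hh0 Hh).
      rewrite Rplus_0_l, atan_0, Rminus_0_r in Hd.
      replace (/ (1 + 0 ^ 2)) with 1 in Hd by (simpl; field).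
      replace (atan h / h + - 1) with (atan h / h - 1) by ring. exact Hd.
  - apply (continuous_ext_loc (T := R_UniformSpace) (U := R_UniformSpace) _ (fun x => atan x / x)).
    + assert (Hd : 0 < Rabs y) by (apply Rabs_pos_lt; exact Hy).
      exists (mkposreal _ Hd). intros x Hx. cbn in Hx.
      unfold AbsRing_ball, abs, minus, plus, opp in Hx. cbn in Hx.
      symmetry. apply atanc_neq0. intros ->. rewrite Rplus_0_l, Rabs_Ropp in Hx. lra.
    + solve_continuous.
Qed.

Lemma Ti2_RInt_atanc (x : R) : Ti2 x = RInt atanc 0 x.
Proof.
  apply RInt_ext. intros y Hy. symmetry. apply atanc_neq0.
  unfold Rmin, Rmax in Hy. destruct Rle_dec; lra.
Qed.

Lemma RInt_cos_kernel_du (r : R) : Rabs r < 1 ->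
  RInt (fun t => t * cos_kernel_du r t) 0 (PI / 2)
  = PI / 2 / (1 + r * r) - r / 2 * Derive Li2 (- (r * r)) - Derive Li2 r :> R.
Proof.
  intros Hr.
  assert (Hden := fun t => poisson_den_pos r t Hr).
  assert (Hcont : forall t, continuous (fun t => t * cos_kernel_du r t) t).
  { intros t. specialize (Hden t). unfold cos_kernel_du, poisson_den in *.
    solve_continuous. nra. }
  destruct (Req_dec r 0) as [-> | Hr0].
  - rewrite Derive_Li2_0. replace (- (0 * 0)) with 0 by ring. rewrite Derive_Li2_0.
    rewrite (RInt_antiderivative (fun t => t * sin t + cos t)); [| | intros; apply Hcont].
    + rewrite sin_PI2, cos_PI2, sin_0, cos_0. field.
    + intros t _. auto_derive; [auto |]. unfold cos_kernel_du, poisson_den. field.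
  - rewrite (RInt_antiderivative
      (fun t => t * sin t / poisson_den r t - ln (poisson_den r t) / (2 * r)));
      [| | intros; apply Hcont].
    + unfold poisson_den. rewrite sin_PI2, cos_PI2, sin_0, cos_0.
      replace (1 - 2 * r * 0 + r * r) with (1 + r * r) by ring.
      replace (1 - 2 * r * 1 + r * r) with ((1 - r) * (1 - r)) by ring.
      assert (E1 := mul_Derive_Li2 r Hr).
      apply Rabs_lt_1_iff in Hr. rewrite ln_mult by lra.
      assert (E2 := mul_Derive_Li2 (- (r * r)) ltac:(rewrite Rabs_Ropp, Rabs_pos_eq; nra)).
      replace (1 - - (r * r)) with (1 + r * r) in E2 by ring.
      replace (Derive Li2 r) with (- ln (1 - r) / r) by (rewrite <- E1; field; lra).
      replace (Derive Li2 (- (r * r))) with (ln (1 + r * r) / (r * r)) by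
        (apply (Rmult_eq_reg_l (r * r)); [field_simplify; lra | nra]).
      field. split; [lra | nra].
    + intros t _. specialize (Hden t). unfold cos_kernel_du, poisson_den in *.
      auto_derive; [repeat split; lra |].
      apply Rminus_diag_uniq.
      replace (_ - _) with ((sin t ^ 2 + cos t ^ 2 - 1) * (- 2 * r * t / (1 - 2 * r * cos t + r * r) ^ 2))
        by (field; lra).
      rewrite sin_sq_add_cos_sq. ring.
Qed.

Lemma RInt_sin_kernel_du (r : R) : Rabs r < 1 ->
  RInt (fun t => t * sin_kernel_du r t) 0 (PI / 2) = PI / 2 * r / (1 + r * r) + atanc r :> R.
Proof.
  intros Hr.
  assert (Hden := fun t => poisson_den_pos r t Hr).
  assert (Hcont : forall t, continuous (fun t => t * sin_kernel_du r t) t).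
  { intros t. specialize (Hden t). unfold sin_kernel_du, poisson_den in *.
    solve_continuous. nra. }
  destruct (Req_dec r 0) as [-> | Hr0].
  - rewrite atanc_0.
    rewrite (RInt_antiderivative (fun t => sin t - t * cos t)); [| | intros; apply Hcont].
    + rewrite sin_PI2, cos_PI2, sin_0, cos_0. field.
    + intros t _. auto_derive; [auto |]. unfold sin_kernel_du, poisson_den. field.
  - assert (Hc1 : forall t, 0 < 1 - r * cos t).
    { intros t. pose proof (COS_bound t). apply Rabs_def2 in Hr. destruct (Rle_dec 0 r); nra. }
    rewrite atanc_neq0 by exact Hr0.
    (* [d/dt atan (r sin t / (1 - r cos t)) = r (cos t - r) / poisson_den r t]. *)
    rewrite (RInt_antiderivative
      (fun t => t * (r - cos t) / poisson_den r t + atan (r * sin t / (1 - r * cos t)) / r));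
      [| | intros; apply Hcont].
    + unfold poisson_den. rewrite sin_PI2, cos_PI2, sin_0, cos_0.
      replace (r * 0 / (1 - r * 1)) with 0 by (field; apply Rabs_def2 in Hr; lra).
      replace (r * 1 / (1 - r * 0)) with r by field.
      rewrite atan_0. field. apply Rabs_def2 in Hr.
      repeat split; [exact Hr0 | apply Rgt_not_eq; nra | apply Rgt_not_eq; nra].
    + intros t _. specialize (Hden t). specialize (Hc1 t). unfold sin_kernel_du, poisson_den in *.
      auto_derive; [repeat split; lra |].
      apply Rminus_diag_uniq. field_simplify.
      * replace (sin t ^ 2) with (1 - cos t ^ 2) by (pose proof (sin_sq_add_cos_sq t); lra).
        unfold Rdiv. apply Rmult_eq_0_compat_r. ring.
      * repeat split; try exact Hr0; apply Rgt_not_eq; nra.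
Qed.

Definition cos_moment (u : R) : R := RInt (fun t => t * cos_kernel u t) 0 (PI / 2).
Definition sin_moment (u : R) : R := RInt (fun t => t * sin_kernel u t) 0 (PI / 2).

Lemma is_derive_cos_moment (r : R) : Rabs r < 1 ->
  is_derive cos_moment r (PI / 2 / (1 + r * r) - r / 2 * Derive Li2 (- (r * r)) - Derive Li2 r).
Proof.
  intros Hr. rewrite <- RInt_cos_kernel_du by exact Hr.
  apply (is_derive_RInt_param_interval _ (fun u t => t * cos_kernel_du u t) _ _ (-1) 1);
    try (apply Rabs_lt_1_iff; exact Hr); intros u t Hu; apply Rabs_lt_1_iff in Hu.
  - apply is_derive_cos_kernel, Hu.
  - apply continuity_2d_pt_cos_kernel_du, Hu.
  - pose proof (poisson_den_pos u t Hu). unfold cos_kernel, poisson_den in *. solve_continuous. lra.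
Qed.

Lemma is_derive_sin_moment (r : R) : Rabs r < 1 ->
  is_derive sin_moment r (PI / 2 * r / (1 + r * r) + atanc r).
Proof.
  intros Hr. rewrite <- RInt_sin_kernel_du by exact Hr.
  apply (is_derive_RInt_param_interval _ (fun u t => t * sin_kernel_du u t) _ _ (-1) 1);
    try (apply Rabs_lt_1_iff; exact Hr); intros u t Hu; apply Rabs_lt_1_iff in Hu.
  - apply is_derive_sin_kernel, Hu.
  - apply continuity_2d_pt_sin_kernel_du, Hu.
  - pose proof (poisson_den_pos u t Hu). unfold sin_kernel, poisson_den in *. solve_continuous. lra.
Qed.

Lemma cos_moment_eq (r : R) : Rabs r < 1 ->
  cos_moment r = PI / 2 * atan r + / 4 * Li2 (- (r * r)) - Li2 r.
Proof.
  intros Hr.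
  assert (Hseg : forall t, Rmin 0 r <= t <= Rmax 0 r -> Rabs t < 1).
  { intros t Ht. apply Rabs_lt_1_iff. apply Rabs_lt_1_iff in Hr. unfold Rmin, Rmax in Ht.
    destruct Rle_dec; lra. }
  apply (eq_of_is_derive_same cos_moment
    (fun r => PI / 2 * atan r + / 4 * Li2 (- (r * r)) - Li2 r)
    (fun r => PI / 2 / (1 + r * r) - r / 2 * Derive Li2 (- (r * r)) - Derive Li2 r) 0 r).
  - intros t Ht. apply is_derive_cos_moment, Hseg, Ht.
  - intros t Ht. specialize (Hseg t Ht).
    assert (Hsq : Rabs (- (t * t)) < 1).
    { rewrite Rabs_Ropp, Rabs_pos_eq by nra. apply Rabs_lt_1_iff in Hseg. nra. }
    pose proof (is_derive_Li2 _ Hseg). pose proof (is_derive_Li2 _ Hsq).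
    auto_derive.
    + repeat split; eexists; eauto.
    + change (Derive (fun x => Li2 x)) with (Derive Li2).
      replace (- (t * t)) with (- (t * (t * 1))) by ring. field. nra.
  - unfold cos_moment, cos_kernel.
    rewrite (RInt_ext_R _ (fun _ => 0)) by (intros t _; unfold Rdiv; ring).
    rewrite RInt_R_const, atan_0. replace (- (0 * 0)) with 0 by ring.
    rewrite Li2_0. ring.
Qed.

Lemma sin_moment_eq (r : R) : Rabs r < 1 ->
  sin_moment r = PI / 4 * ln (1 + r * r) + RInt atanc 0 r.
Proof.
  intros Hr.
  apply (eq_of_is_derive_same sin_moment (fun r => PI / 4 * ln (1 + r * r) + RInt atanc 0 r)
    (fun r => PI / 2 * r / (1 + r * r) + atanc r) 0 r).
  - intros t Ht. apply is_derive_sin_moment. apply Rabs_lt_1_iff. apply Rabs_lt_1_iff in Hr.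
    unfold Rmin, Rmax in Ht. destruct Rle_dec; lra.
  - intros t _. auto_derive.
    + repeat split; [nra | |].
      * apply (ex_RInt_continuous (V := R_CompleteNormedModule)). intros z _. apply continuous_atanc.
      * exists (mkposreal 1 Rlt_0_1). intros z _. apply continuity_pt_filterlim, continuous_atanc.
    + field. nra.
  - unfold sin_moment, sin_kernel.
    rewrite (RInt_ext_R _ (fun _ => 0)) by (intros t _; unfold Rdiv; ring).
    rewrite RInt_R_const, RInt_point. replace (1 + 0 * 0) with 1 by ring. rewrite ln_1.
    cbn. ring.
Qed.

Theorem proposition1 :
  RInt (fun phi => phi * (2 * cos phi - 1) / (5 - 4 * cos phi)) 0 (PI / 2)
    = - (1 / 12) * PI ^ 2 + (1 / 2) * (ln 2) ^ 2 + (PI / 2) * atan (1 / 2)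
      + (1 / 4) * Li2 (- (1 / 4))
  /\
  RInt (fun phi => 2 * phi * sin phi / (5 - 4 * cos phi)) 0 (PI / 2)
    = (PI / 4) * ln (5 / 4) + Ti2 (1 / 2).
Proof.
  assert (Hden : forall phi, 0 < 5 - 4 * cos phi).
  { intros phi. pose proof (COS_bound phi). lra. }
  split.
  - apply (@eq_trans R _ (cos_moment (1 / 2))).
    { apply RInt_ext_R. intros phi _. unfold cos_kernel, poisson_den. field.
      specialize (Hden phi). apply Rgt_not_eq. lra. }
    rewrite cos_moment_eq by (rewrite Rabs_pos_eq; lra).
    replace (- (1 / 2 * (1 / 2))) with (- (1 / 4)) by field.
    rewrite Li2_half. field.
  - apply (@eq_trans R _ (sin_moment (1 / 2))).
    { apply RInt_ext_R. intros phi _. unfold sin_kernel, poisson_den. field.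
      specialize (Hden phi). apply Rgt_not_eq. lra. }
    rewrite sin_moment_eq by (rewrite Rabs_pos_eq; lra).
    rewrite Ti2_RInt_atanc. replace (1 + 1 / 2 * (1 / 2)) with (5 / 4) by field. reflexivity.
Qed.
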